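(* There exists a universal constant $K>0$ such that the following holds. Let $d\ge 1$, let $q$ be a probability distribution on $[d]=\{1,\dots,d\}$, let $\varepsilon>0$, and let $T\ge K\cdot\frac{\sqrt d}{\varepsilon^2}$. Then there is an algorithm which, given $c=2$ independent samples from each of (unknown) probability distributions $p_1,\dots,p_T$ on $[d]$ (all $2T$ samples mutually independent), distinguishes with probability at least $0.99$ the case $p_{\mathrm{avg}}=q$ from the case $d_{\mathrm{TV}}(p_{\mathrm{avg}},q)>\varepsilon$, where $p_{\mathrm{avg}}=\frac1T\sum_{t=1}^T p_t$.
   Context: $d_{\mathrm{TV}}$ denotes total variation distance. ''Distinguishes with probability at least $0.99$'' means: the algorithm (which may depend on $d,q,\varepsilon,T$ but not on the $p_t$) outputs ''accept'' or ''reject'', and it accepts with probability at least $0.99$ whenever the first case holds and rejects with probability at least $0.99$ whenever the second case holds. *)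

From HB Require Import structures.
From mathcomp Require Import all_boot all_order all_algebra.
From mathcomp Require Import reals Rstruct.
From Stdlib Require Rdefinitions.
Notation R := Rdefinitions.R.
Set Implicit Arguments. Unset Strict Implicit. Unset Printing Implicit Defensive.
Import Order.TTheory GRing.Theory Num.Theory.
Local Open Scope ring_scope.

(* A probability distribution on [d] = 'I_d (elements 0..d-1). *)
Definition is_distr (d : nat) (p : {ffun 'I_d -> R}) : Prop :=
  (forall i, 0 <= p i) /\ \sum_(i < d) p i = 1.

Definition dTV (d : nat) (p q : {ffun 'I_d -> R}) : R :=
  (\sum_(i < d) `|p i - q i|) / 2.

Definition pavg (d T : nat) (p : 'I_T -> {ffun 'I_d -> R}) : {ffun 'I_d -> R} :=
  [ffun i => (\sum_(t < T) p t i) / T%:R].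

(* A sample record: s (t, j) is the j-th sample (j < 2) from p_t. *)
Definition samples (d T : nat) := {ffun 'I_T * 'I_2 -> 'I_d}.

Definition sample_prob (d T : nat) (p : 'I_T -> {ffun 'I_d -> R})
  (s : samples d T) : R :=
  \prod_(t < T) \prod_(j < 2) p t (s (t, j)).

(* A (possibly randomized) algorithm is described by its acceptance
   probability A s in [0,1] on every sample record s. *)
Definition is_algorithm (d T : nat) (A : samples d T -> R) : Prop :=
  forall s, 0 <= A s <= 1.

Definition accept_prob (d T : nat) (A : samples d T -> R)
  (p : 'I_T -> {ffun 'I_d -> R}) : R :=
  \sum_(s : samples d T) sample_prob p s * A s.

From HB Require Import structures.
From mathcomp Require Import all_boot all_order all_algebra.
From mathcomp Require Import reals Rstruct lra ring.

Set Implicit Arguments.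
Unset Strict Implicit.
Unset Printing Implicit Defensive.

Import Order.TTheory GRing.Theory Num.Theory.
Local Open Scope ring_scope.

(* Split the two draws from each p_t into independent rows X and Y and let
   A_i = \sum_t (1[x_t = i] - q_i) be the centred count of i in a row.  With
   w_i = 1 / (q_i + 1/d), the statistic Z = \sum_i w_i A_i(X) A_i(Y) has mean
   \sum_i w_i E[A_i]^2 = T^2 \sum_i w_i (p_avg(i) - q_i)^2, a smoothed
   chi-square distance, because the rows are independent.  Its variance is
   bounded through the covariance of the counts in terms of the masses
   \sum_t p_t(i) = T p_avg(i).  As the 1 / w_i sum to 2, AM-GM turns
   d_TV(p_avg, q) > eps into a chi-square distance above 2 eps^2.  The test
   accepts iff Z <= T^2 eps^2, and Chebyshev's inequality on either side
   bounds the error by 1/100 once T eps^2 >= 4000 sqrt d. *)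

Lemma sum_mul_eq_nat (D : finType) (f : D -> R) (i : D) :
  \sum_y f y * (y == i)%:R = f i.
Proof.
by rewrite (bigD1 i) //= eqxx mulr1 big1 ?addr0 // => y /negbTE ->; rewrite mulr0.
Qed.

Lemma prod_if_eq (I : finType) (a : I -> R) (t0 : I) :
  \prod_t (if t == t0 then a t else 1) = a t0.
Proof. by rewrite -big_mkcond big_pred1_eq. Qed.

Lemma sum_eq_nat_mul (D : finType) (f : D -> R) (i : D) :
  \sum_j (i == j)%:R * f j = f i.
Proof. by under eq_bigr do rewrite eq_sym mulrC; rewrite sum_mul_eq_nat. Qed.

Section SecondMomentTails.
Variables (S : finType) (P : S -> R).
Hypotheses (P_ge0 : forall s, 0 <= P s) (P_sum1 : \sum_s P s = 1).

Lemma sum_sq_dev_mean (V : S -> R) :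
  \sum_s P s * (V s - \sum_s P s * V s) ^+ 2 =
  \sum_s P s * V s ^+ 2 - (\sum_s P s * V s) ^+ 2.
Proof.
set mu := \sum_s P s * V s.
transitivity (\sum_s (P s * V s ^+ 2 - (2 * mu) * (P s * V s) + mu ^+ 2 * P s)).
  by apply: eq_bigr => s _; ring.
by rewrite big_split sumrB /= -!mulr_sumr -/mu P_sum1; ring.
Qed.

Lemma accept_ge_second_moment (V : S -> R) (tau : R) : 0 < tau ->
  1 - (\sum_s P s * V s ^+ 2) / tau ^+ 2 <=
  \sum_s P s * (if V s <= tau then 1 else 0).
Proof.
move=> tau_gt0; have tau2_gt0 : 0 < tau ^+ 2 by exact: exprn_gt0.
rewrite -[X in X - _]P_sum1 mulr_suml -sumrB; apply: ler_sum => s _.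
rewrite -mulrA -[X in X - _]mulr1 -mulrBr; apply: ler_wpM2l => //.
case: (leP (V s) tau) => [_ | V_gt]; first by rewrite gerBl divr_ge0 ?sqr_ge0.
rewrite subr_le0 ler_pdivlMr // mul1r.
by rewrite !expr2; nra.
Qed.

Lemma accept_le_variance (V : S -> R) (tau : R) :
  tau < \sum_s P s * V s ->
  \sum_s P s * (if V s <= tau then 1 else 0) <=
  (\sum_s P s * V s ^+ 2 - (\sum_s P s * V s) ^+ 2) / (\sum_s P s * V s - tau) ^+ 2.
Proof.
set mu := \sum_s P s * V s => tau_lt.
have gap_gt0 : 0 < (mu - tau) ^+ 2 by rewrite exprn_gt0 // subr_gt0.
rewrite -sum_sq_dev_mean -/mu mulr_suml; apply: ler_sum => s _.
rewrite -mulrA; apply: ler_wpM2l => //.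
case: (leP (V s) tau) => [V_le | _]; last by rewrite divr_ge0 ?sqr_ge0.
rewrite ler_pdivlMr // mul1r -sqrrN opprB.
by rewrite !expr2; nra.
Qed.

End SecondMomentTails.

Section ProductExpectation.
Variables (I D : finType) (p : I -> {ffun D -> R}).
Hypothesis p_sum1 : forall t, \sum_i p t i = 1.

Definition prod_weight (x : {ffun I -> D}) : R := \prod_t p t (x t).

Definition expect (F : {ffun I -> D} -> R) : R := \sum_x prod_weight x * F x.

Lemma eq_expect (F G : {ffun I -> D} -> R) : F =1 G -> expect F = expect G.
Proof. by move=> FG; apply: eq_bigr => x _; rewrite FG. Qed.

Lemma expect_sum (J : finType) (F : J -> {ffun I -> D} -> R) :
  expect (fun x => \sum_k F k x) = \sum_k expect (F k).
Proof. by rewrite exchange_big; apply: eq_bigr => x _; rewrite mulr_sumr. Qed.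

Lemma expect_prod (g : I -> D -> R) :
  expect (fun x => \prod_t g t (x t)) = \prod_t \sum_i p t i * g t i.
Proof. by rewrite bigA_distr_bigA; apply: eq_bigr => x _; rewrite -big_split. Qed.

Lemma expect1 : expect (fun=> 1) = 1.
Proof.
rewrite (@eq_expect _ (fun x => \prod_t (fun _ _ => 1) t (x t))); last first.
  by move=> x; rewrite big1.
by rewrite (expect_prod (fun _ _ => 1)) big1 // => t _; under eq_bigr do rewrite mulr1.
Qed.

Lemma expect_pair (t0 t1 : I) (f h : D -> R) :
  expect (fun x => f (x t0) * h (x t1)) =
  if t0 == t1 then \sum_i p t0 i * (f i * h i)
  else (\sum_i p t0 i * f i) * (\sum_i p t1 i * h i).
Proof.
pose g t i := (if t == t0 then f i else 1) * (if t == t1 then h i else 1).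
rewrite (@eq_expect _ (fun x => \prod_t g t (x t))); last first.
  by move=> x; rewrite big_split /= !prod_if_eq.
rewrite (expect_prod g) /g; case: eqP => [<- | /eqP t01].
  rewrite -(prod_if_eq (fun t => \sum_i p t i * (f i * h i))).
  apply: eq_bigr => t _; case: eqP => // _.
  by under eq_bigr do rewrite !mulr1; rewrite p_sum1.
rewrite -(prod_if_eq (fun t => \sum_i p t i * f i) t0).
rewrite -(prod_if_eq (fun t => \sum_i p t i * h i) t1) -big_split.
apply: eq_bigr => t _ /=.
case: (eqVneq t t0) => [tt0 | _]; case: (eqVneq t t1) => [tt1 | _] /=.
- by move: t01; rewrite -tt0 -tt1 eqxx.
all: by under eq_bigr do rewrite ?mulr1 ?mul1r; rewrite ?p_sum1 ?mulr1 ?mul1r.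
Qed.

Lemma expect_coord (t0 : I) (g : D -> R) :
  expect (fun x => g (x t0)) = \sum_i p t0 i * g i.
Proof.
rewrite (@eq_expect _ (fun x => g (x t0) * (fun=> 1) (x t0))); last first.
  by move=> x; rewrite mulr1.
by rewrite (expect_pair t0 t0 g (fun=> 1)) eqxx; under eq_bigr do rewrite mulr1.
Qed.

End ProductExpectation.

Section TwoSamples.
Variables (d T : nat) (p : 'I_T -> {ffun 'I_d -> R}).

Definition first_draws (s : samples d T) : {ffun 'I_T -> 'I_d} :=
  [ffun t => s (t, ord0)].
Definition second_draws (s : samples d T) : {ffun 'I_T -> 'I_d} :=
  [ffun t => s (t, ord_max)].
Definition merge_draws (u : {ffun 'I_T -> 'I_d} * {ffun 'I_T -> 'I_d}) :
  samples d T := [ffun k => if k.2 == ord0 then u.1 k.1 else u.2 k.1].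

Definition split_draws (s : samples d T) := (first_draws s, second_draws s).

Lemma merge_drawsK : cancel merge_draws split_draws.
Proof. by move=> [x y]; congr pair; apply/ffunP => t; rewrite !ffunE. Qed.

Lemma split_drawsK : cancel split_draws merge_draws.
Proof.
move=> s; apply/ffunP => [[t [[|[|//]] j_lt]]];
  by rewrite /merge_draws /split_draws /first_draws /second_draws !ffunE /= ?ffunE;
    congr (s (t, _)); apply: val_inj.
Qed.

Lemma sample_prob_merge x y :
  sample_prob p (merge_draws (x, y)) = prod_weight p x * prod_weight p y.
Proof.
rewrite -big_split; apply: eq_bigr => t _.
by rewrite big_ord_recr big_ord1 /= !ffunE.
Qed.

Lemma expect_samples_mul (F G : {ffun 'I_T -> 'I_d} -> R) :
  \sum_s sample_prob p s * (F (first_draws s) * G (second_draws s)) =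
  expect p F * expect p G.
Proof.
rewrite (reindex merge_draws) /=; last first.
  by exists split_draws => u _; [exact: merge_drawsK | exact: split_drawsK].
rewrite /expect mulr_suml; under [RHS]eq_bigr do rewrite mulr_sumr.
rewrite pair_big; apply: eq_bigr => [[x y]] _ /=.
by move: (merge_drawsK (x, y)) => [-> ->]; rewrite sample_prob_merge; ring.
Qed.

Lemma sample_prob_ge0 : (forall t i, 0 <= p t i) -> forall s, 0 <= sample_prob p s.
Proof. by move=> p_ge0 s; do 2!apply: prodr_ge0 => ? _. Qed.

End TwoSamples.

Section CentredCounts.
Variables (I D : finType) (p : I -> {ffun D -> R}) (q : D -> R).
Hypothesis p_sum1 : forall t, \sum_i p t i = 1.

Definition centred_count (i : D) (x : {ffun I -> D}) : R :=
  \sum_t ((x t == i)%:R - q i).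
Definition drift (i : D) : R := \sum_t (p t i - q i).
Definition mass (i : D) : R := \sum_t p t i.
Definition pair_mass (i j : D) : R := \sum_t p t i * p t j.
Definition count_cov (i j : D) : R := (i == j)%:R * mass i - pair_mass i j.

Lemma sum_centred_indicator t i :
  \sum_y p t y * ((y == i)%:R - q i) = p t i - q i.
Proof.
under eq_bigr do rewrite mulrBr.
by rewrite sumrB sum_mul_eq_nat -mulr_suml p_sum1 mul1r.
Qed.

Lemma sum_centred_indicator_mul t i j :
  \sum_y p t y * (((y == i)%:R - q i) * ((y == j)%:R - q j)) =
  (i == j)%:R * p t i - p t i * p t j + (p t i - q i) * (p t j - q j).
Proof.
have indicator_mul y : (y == i)%:R * ((y == j)%:R - q j) =
    (y == i)%:R * ((i == j)%:R - q j) :> R.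
  by case: (eqVneq y i) => [-> | _]; rewrite ?mul0r.
transitivity (\sum_y p t y * (y == i)%:R * ((i == j)%:R - q j) -
              q i * \sum_y p t y * ((y == j)%:R - q j)).
  rewrite [X in _ - X]mulr_sumr -sumrB; apply: eq_bigr => y _.
  rewrite mulrBl -mulrA indicator_mul.
  by move: (_ == _)%:R (_ == _)%:R (_ == _)%:R => a b c; ring.
rewrite -mulr_suml sum_mul_eq_nat sum_centred_indicator.
by move: (i == j)%:R => c; ring.
Qed.

Lemma expect_centred_count i : expect p (centred_count i) = drift i.
Proof.
rewrite expect_sum; apply: eq_bigr => t _.
by rewrite (expect_coord p_sum1 t (fun y => (y == i)%:R - q i)) sum_centred_indicator.
Qed.

Lemma expect_centred_count_mul i j :
  expect p (fun x => centred_count i x * centred_count j x) =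
  drift i * drift j + count_cov i j.
Proof.
pose a k (y : D) : R := (y == k)%:R - q k.
rewrite (@eq_expect _ _ _ _ (fun x => \sum_t \sum_u a i (x t) * a j (x u)));
  last first.
  by move=> x; rewrite mulr_suml; apply: eq_bigr => t _; rewrite mulr_sumr.
rewrite expect_sum; under eq_bigr do rewrite expect_sum.
have cov_t t u : expect p (fun x => a i (x t) * a j (x u)) =
    (p t i - q i) * (p u j - q j) +
    (t == u)%:R * ((i == j)%:R * p t i - p t i * p t j).
  rewrite expect_pair // !sum_centred_indicator.
  case: (eqVneq t u) => [<- | _]; rewrite ?sum_centred_indicator_mul /=;
    by move: (i == j)%:R => c; ring.
under eq_bigr do under eq_bigr do rewrite cov_t.
rewrite /drift /count_cov /mass /pair_mass mulr_suml mulr_sumr -sumrB -big_split.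
apply: eq_bigr => t _ /=; rewrite big_split /= mulr_sumr; congr (_ + _).
by rewrite sum_eq_nat_mul.
Qed.

End CentredCounts.

Section CountCovarianceBounds.
Variables (I D : finType) (p : I -> {ffun D -> R}).
Hypotheses (p_ge0 : forall t i, 0 <= p t i) (p_sum1 : forall t, \sum_i p t i = 1).

Lemma pair_massC i j : pair_mass p i j = pair_mass p j i.
Proof. by apply: eq_bigr => t _; rewrite mulrC. Qed.

Lemma pair_mass_ge0 i j : 0 <= pair_mass p i j.
Proof. by apply: sumr_ge0 => t _; rewrite mulr_ge0. Qed.

Lemma pair_mass_le_mass i j : pair_mass p i j <= mass p i.
Proof.
apply: ler_sum => t _; rewrite ler_piMr // -(p_sum1 t) (bigD1 j) //= lerDl.
exact: sumr_ge0.
Qed.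

Lemma sum_pair_mass i : \sum_j pair_mass p i j = mass p i.
Proof.
by rewrite exchange_big; apply: eq_bigr => t _; rewrite -mulr_sumr p_sum1 mulr1.
Qed.

Lemma sum_pair_mass_sq_le i : \sum_j pair_mass p i j ^+ 2 <= mass p i ^+ 2.
Proof.
rewrite expr2 -[X in _ <= _ * X]sum_pair_mass mulr_sumr.
apply: ler_sum => j _; rewrite expr2 ler_wpM2r ?pair_mass_ge0 //.
exact: pair_mass_le_mass.
Qed.

Lemma count_cov_quad_le (v : D -> R) :
  \sum_i \sum_j v i * v j * count_cov p i j <= \sum_i v i ^+ 2 * mass p i.
Proof.
have diag : \sum_i \sum_j v i * v j * ((i == j)%:R * mass p i) =
    \sum_i v i ^+ 2 * mass p i.
  apply: eq_bigr => i _.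
  rewrite (eq_bigr (fun j => (i == j)%:R * (v i * v j * mass p i))); last first.
    by move=> j _; rewrite mulrCA.
  by rewrite sum_eq_nat_mul expr2.
have cross : \sum_i \sum_j v i * v j * pair_mass p i j =
    \sum_t (\sum_i v i * p t i) ^+ 2.
  rewrite /pair_mass; under eq_bigr do under eq_bigr do rewrite mulr_sumr.
  under eq_bigr do rewrite exchange_big; rewrite exchange_big.
  apply: eq_bigr => t _; rewrite expr2 mulr_suml; apply: eq_bigr => i _.
  by rewrite mulr_sumr; apply: eq_bigr => j _; ring.
have -> : \sum_i \sum_j v i * v j * count_cov p i j =
    \sum_i \sum_j v i * v j * ((i == j)%:R * mass p i) -
    \sum_i \sum_j v i * v j * pair_mass p i j.
  by rewrite -sumrB; apply: eq_bigr => i _; rewrite -sumrB;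
    apply: eq_bigr => j _; rewrite /count_cov mulrBr.
by rewrite diag cross gerBl sumr_ge0 // => t _; rewrite sqr_ge0.
Qed.

Lemma count_cov_sq_le (w : D -> R) : (forall i, 0 <= w i) ->
  \sum_i \sum_j w i * w j * count_cov p i j ^+ 2 <=
  4 * \sum_i w i ^+ 2 * mass p i ^+ 2.
Proof.
move=> w_ge0.
(* (a - b)^2 <= 2 a^2 + 2 b^2 on the diagonal, 2 w_i w_j <= w_i^2 + w_j^2 off it *)
have pointwise i j : w i * w j * count_cov p i j ^+ 2 <=
    2 * ((i == j)%:R * (w i ^+ 2 * mass p i ^+ 2)) +
    (w i ^+ 2 * pair_mass p i j ^+ 2 + w j ^+ 2 * pair_mass p j i ^+ 2).
  rewrite /count_cov (pair_massC j i).
  case: (eqVneq i j) => [<- | _]; rewrite ?eqxx /=.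
    move: (w i) (mass p i) (pair_mass p i i) => a m c.
    have := mulr_ge0 (sqr_ge0 a) (sqr_ge0 (m + c)).
    by rewrite -[a * a]expr2; nra.
  move: (w i) (w j) (mass p i) (pair_mass p i j) => a b m c.
  have := mulr_ge0 (sqr_ge0 (a - b)) (sqr_ge0 c).
  by nra.
apply: le_trans (ler_sum _ (fun i _ => ler_sum _ (fun j _ => pointwise i j))) _.
under eq_bigr do rewrite !big_split /=.
rewrite !big_split /=.
under eq_bigr do rewrite -mulr_sumr sum_eq_nat_mul.
rewrite -mulr_sumr [X in _ + (_ + X)]exchange_big /=.
have pair_bound : \sum_i \sum_j w i ^+ 2 * pair_mass p i j ^+ 2 <=
    \sum_i w i ^+ 2 * mass p i ^+ 2.
  apply: ler_sum => i _; rewrite -mulr_sumr ler_wpM2l ?sqr_ge0 //.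
  exact: sum_pair_mass_sq_le.
lra.
Qed.

Lemma second_moment_gap_le (w b : D -> R) : (forall i, 0 <= w i) ->
  \sum_i \sum_j w i * w j * (b i * b j + count_cov p i j) ^+ 2
    - (\sum_i w i * b i ^+ 2) ^+ 2 <=
  2 * \sum_i w i ^+ 2 * b i ^+ 2 * mass p i + 4 * \sum_i w i ^+ 2 * mass p i ^+ 2.
Proof.
move=> w_ge0.
have -> : \sum_i \sum_j w i * w j * (b i * b j + count_cov p i j) ^+ 2
    - (\sum_i w i * b i ^+ 2) ^+ 2 =
  2 * \sum_i \sum_j (w i * b i) * (w j * b j) * count_cov p i j +
  \sum_i \sum_j w i * w j * count_cov p i j ^+ 2.
  rewrite expr2 mulr_suml mulr_sumr -sumrB -big_split; apply: eq_bigr => i _ /=.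
  rewrite mulr_sumr mulr_sumr -sumrB -big_split; apply: eq_bigr => j _ /=; ring.
have cross := count_cov_quad_le (fun i => w i * b i).
have squares := count_cov_sq_le w_ge0.
have -> : \sum_i w i ^+ 2 * b i ^+ 2 * mass p i =
    \sum_i (w i * b i) ^+ 2 * mass p i.
  by apply: eq_bigr => i _; rewrite exprMn.
lra.
Qed.

End CountCovarianceBounds.

Section CrossStatistic.
Variables (d T : nat) (p : 'I_T -> {ffun 'I_d -> R}) (q w : 'I_d -> R).
Hypothesis p_sum1 : forall t, \sum_i p t i = 1.

Definition cross_stat (s : samples d T) : R :=
  \sum_i w i *
    (centred_count q i (first_draws s) * centred_count q i (second_draws s)).

Lemma sum_sample_prob : \sum_s sample_prob p s = 1.
Proof.
have := expect_samples_mul p (fun=> 1) (fun=> 1).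
rewrite (expect1 p_sum1) mulr1 => <-.
by apply: eq_bigr => s _; rewrite !mulr1.
Qed.

Lemma mean_cross_stat :
  \sum_s sample_prob p s * cross_stat s = \sum_i w i * drift p q i ^+ 2.
Proof.
under eq_bigr do rewrite /cross_stat mulr_sumr.
rewrite exchange_big; apply: eq_bigr => i _ /=.
under eq_bigr do rewrite mulrCA.
by rewrite -mulr_sumr expect_samples_mul expect_centred_count.
Qed.

Lemma second_moment_cross_stat :
  \sum_s sample_prob p s * cross_stat s ^+ 2 =
  \sum_i \sum_j w i * w j * (drift p q i * drift p q j + count_cov p i j) ^+ 2.
Proof.
pose cross i (s : samples d T) :=
  w i * (centred_count q i (first_draws s) * centred_count q i (second_draws s)).
have sqr_sum s : sample_prob p s * cross_stat s ^+ 2 =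
    \sum_i \sum_j sample_prob p s * (cross i s * cross j s).
  rewrite expr2 mulr_suml mulr_sumr; apply: eq_bigr => i _.
  by rewrite mulr_sumr mulr_sumr; apply: eq_bigr => j _.
under eq_bigr do rewrite sqr_sum.
rewrite exchange_big; apply: eq_bigr => i _.
rewrite exchange_big; apply: eq_bigr => j _.
pose cc2 (x : {ffun 'I_T -> 'I_d}) := centred_count q i x * centred_count q j x.
transitivity (w i * w j *
    \sum_s sample_prob p s * (cc2 (first_draws s) * cc2 (second_draws s))).
  by rewrite mulr_sumr; apply: eq_bigr => s _; rewrite /cross /cc2; ring.
by rewrite expect_samples_mul expect_centred_count_mul // expr2.
Qed.

End CrossStatistic.

Section TestWeights.
Variables (d : nat) (q : {ffun 'I_d -> R}).
Hypotheses (d_gt0 : (0 < d)%N) (q_distr : is_distr q).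

Definition test_weight (i : 'I_d) : R := (q i + d%:R^-1)^-1.

Definition smoothed_chi2 (pi : {ffun 'I_d -> R}) : R :=
  \sum_i test_weight i * (pi i - q i) ^+ 2.

Lemma smoothed_gt0 i : 0 < q i + d%:R^-1.
Proof. by rewrite ltr_wpDl ?invr_gt0 ?ltr0n //; case: q_distr. Qed.

Lemma sum_smoothed : \sum_i (q i + d%:R^-1) = 2.
Proof.
case: q_distr => _ q_sum1; rewrite big_split /= q_sum1 sumr_const card_ord.
by rewrite -[_^-1 *+ _]mulr_natr mulVf ?pnatr_eq0 -?lt0n.
Qed.

Lemma test_weight_gt0 i : 0 < test_weight i.
Proof. by rewrite invr_gt0 smoothed_gt0. Qed.

Lemma test_weight_ge0 i : 0 <= test_weight i.
Proof. exact: ltW (test_weight_gt0 i). Qed.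

Lemma test_weightK i : test_weight i * (q i + d%:R^-1) = 1.
Proof. by rewrite mulVf // gt_eqF ?smoothed_gt0. Qed.

Lemma test_weight_le_dim i : test_weight i <= d%:R.
Proof.
rewrite /test_weight -[leRHS]invrK lef_pV2 ?posrE ?smoothed_gt0 ?invr_gt0 ?ltr0n //.
by rewrite lerDr; case: q_distr.
Qed.

Lemma test_weight_mul_le1 i : test_weight i * q i <= 1.
Proof.
by rewrite -[leRHS](test_weightK i) ler_pM2l ?test_weight_gt0 // lerDl invr_ge0.
Qed.

Lemma test_weight_mul_ge0 i : 0 <= test_weight i * q i.
Proof. by rewrite mulr_ge0 ?test_weight_ge0 //; case: q_distr. Qed.

Lemma l1_le_smoothed_chi2 (pi : {ffun 'I_d -> R}) (e : R) :
  2 * e * \sum_i `|pi i - q i| <= smoothed_chi2 pi + 2 * e ^+ 2.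
Proof.
rewrite -[in 2 * e ^+ 2]sum_smoothed mulr_sumr mulr_suml -big_split.
apply: ler_sum => i _ /=.
have w_gt0 := test_weight_gt0 i; have wK := test_weightK i.
set w := test_weight i; set v := q i + d%:R^-1; set x := pi i - q i.
have : 0 <= w * (`|x| - e * v) ^+ 2 by rewrite mulr_ge0 ?sqr_ge0 ?ltW.
have -> : w * (`|x| - e * v) ^+ 2 =
    w * `|x| ^+ 2 - 2 * e * `|x| * (w * v) + e ^+ 2 * v * (w * v) by ring.
by rewrite wK real_normK ?num_real //; lra.
Qed.

Lemma smoothed_chi2_gt (pi : {ffun 'I_d -> R}) (e : R) :
  0 < e -> e < dTV pi q -> 2 * e ^+ 2 < smoothed_chi2 pi.
Proof.
rewrite /dTV ltr_pdivlMr // => e_gt0 far.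
have := l1_le_smoothed_chi2 pi e.
have : 2 * e * (e * 2) < 2 * e * \sum_i `|pi i - q i|.
  by rewrite ltr_pM2l ?mulr_gt0.
by rewrite expr2; lra.
Qed.

Lemma weight_dev_sq_le_term (pi : {ffun 'I_d -> R}) i :
  (test_weight i * (pi i - q i)) ^+ 2 <=
  d%:R * (test_weight i * (pi i - q i) ^+ 2).
Proof.
rewrite exprMn expr2 -mulrA ler_wpM2r ?test_weight_le_dim //.
by rewrite mulr_ge0 ?sqr_ge0 ?test_weight_ge0.
Qed.

Lemma weight_dev_sq_le (pi : {ffun 'I_d -> R}) i :
  (test_weight i * (pi i - q i)) ^+ 2 <= d%:R * smoothed_chi2 pi.
Proof.
apply: le_trans (weight_dev_sq_le_term pi i) _; rewrite ler_wpM2l ?ler0n //.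
rewrite /smoothed_chi2 (bigD1 i) //= lerDl sumr_ge0 // => j _.
by rewrite mulr_ge0 ?sqr_ge0 ?test_weight_ge0.
Qed.

Lemma sum_weight_mass_sq_le (pi : {ffun 'I_d -> R}) :
  \sum_i (test_weight i * pi i) ^+ 2 <= 2 * d%:R * (1 + smoothed_chi2 pi).
Proof.
have -> : 2 * d%:R * (1 + smoothed_chi2 pi) =
    \sum_i (2 + 2 * d%:R * (test_weight i * (pi i - q i) ^+ 2)).
  rewrite /smoothed_chi2 big_split /= sumr_const card_ord -mulr_sumr.
  by rewrite -[2 *+ d]mulr_natr; ring.
apply: ler_sum => i _.
have := weight_dev_sq_le_term pi i; have := test_weight_mul_le1 i.
have := test_weight_mul_ge0 i.
have -> : test_weight i * pi i =
    test_weight i * q i + test_weight i * (pi i - q i) by ring.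
move: (test_weight i * q i) (test_weight i * (pi i - q i)) => a b a_ge0 a_le1 b_le.
have := sqr_ge0 (a - b); nra.
Qed.

Lemma sum_weight_sq_dev_mass_le (pi : {ffun 'I_d -> R}) (M : R) :
  (forall i, test_weight i * (pi i - q i) <= M) ->
  \sum_i test_weight i ^+ 2 * (pi i - q i) ^+ 2 * pi i <=
  smoothed_chi2 pi * (1 + M).
Proof.
move=> dev_le; rewrite /smoothed_chi2 mulr_suml; apply: ler_sum => i _.
have -> : test_weight i ^+ 2 * (pi i - q i) ^+ 2 * pi i =
    test_weight i * (pi i - q i) ^+ 2 *
    (test_weight i * q i + test_weight i * (pi i - q i)) by ring.
rewrite ler_wpM2l ?(mulr_ge0 (test_weight_ge0 i) (sqr_ge0 _)) //.
by rewrite lerD ?test_weight_mul_le1.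
Qed.

End TestWeights.

Lemma dTV_le1 (d : nat) (p q : {ffun 'I_d -> R}) :
  is_distr p -> is_distr q -> dTV p q <= 1.
Proof.
move=> [p_ge0 p_sum1] [q_ge0 q_sum1].
rewrite /dTV ler_pdivrMr // mul1r.
apply: le_trans (_ : \sum_i (p i + q i) <= 2); last first.
  by rewrite big_split /= p_sum1 q_sum1.
apply: ler_sum => i _; rewrite ler_norml.
by apply/andP; split; have := p_ge0 i; have := q_ge0 i; lra.
Qed.

Section AverageDistribution.
Variables (d T : nat) (p : 'I_T -> {ffun 'I_d -> R}).
Hypothesis T_gt0 : (0 < T)%N.

Lemma pavg_distr : (forall t, is_distr (p t)) -> is_distr (pavg p).
Proof.
move=> p_distr; split=> [i | ].
  by rewrite ffunE divr_ge0 ?ler0n // sumr_ge0 // => t _; case: (p_distr t).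
under eq_bigr do rewrite ffunE.
rewrite -mulr_suml exchange_big /=.
under eq_bigr do rewrite (proj2 (p_distr _)).
by rewrite sumr_const card_ord mulfV // pnatr_eq0 -lt0n.
Qed.

Lemma mass_pavg i : mass p i = T%:R * pavg p i.
Proof. by rewrite ffunE mulrC divfK // pnatr_eq0 -lt0n. Qed.

Lemma drift_pavg (q : 'I_d -> R) i : drift p q i = T%:R * (pavg p i - q i).
Proof.
rewrite /drift sumrB -/(mass p i) mass_pavg sumr_const card_ord.
by rewrite -[q i *+ T]mulr_natl; ring.
Qed.

End AverageDistribution.

Lemma sample_size_bounds (T e d : R) : 1 <= d -> 0 < e ->
  4000 * Num.sqrt d / e ^+ 2 <= T ->
  [/\ 0 < T, 4000 <= T * e ^+ 2 & 4000 ^+ 2 * d <= (T * e ^+ 2) ^+ 2].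
Proof.
move=> d_ge1 e_gt0; have e2_gt0 : 0 < e ^+ 2 by rewrite exprn_gt0.
rewrite ler_pdivrMr // => T_ge.
have sqrt_ge0 := sqrtr_ge0 d; have sqrtK := sqr_sqrtr (le_trans ler01 d_ge1).
have sqrt_ge1 : 1 <= Num.sqrt d by move: sqrtK; rewrite expr2; nra.
have size_ge : 4000 <= T * e ^+ 2 by nra.
split=> //; first by rewrite -(pmulr_lgt0 _ e2_gt0); apply: lt_le_trans size_ge.
have lhs_ge0 : 0 <= 4000 * Num.sqrt d by rewrite mulr_ge0.
rewrite -sqrtK -exprMn ler_pXn2r ?nnegrE //; exact: le_trans T_ge.
Qed.

Lemma null_error_small (T e d m : R) : 0 < T -> 0 < e ->
  4000 ^+ 2 * d <= (T * e ^+ 2) ^+ 2 -> m <= 8 * T ^+ 2 * d ->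
  99 / 100 <= 1 - m / (T ^+ 2 * e ^+ 2) ^+ 2.
Proof.
move=> T_gt0 e_gt0 size_sq_ge m_le.
have tau2_gt0 : 0 < (T ^+ 2 * e ^+ 2) ^+ 2.
  by rewrite exprn_gt0 // mulr_gt0 // exprn_gt0.
have T2_gt0 : 0 < T ^+ 2 by rewrite exprn_gt0.
suff : m / (T ^+ 2 * e ^+ 2) ^+ 2 <= 1 / 100 by lra.
rewrite ler_pdivrMr //.
have -> : (T ^+ 2 * e ^+ 2) ^+ 2 = T ^+ 2 * (T * e ^+ 2) ^+ 2 by ring.
have : T ^+ 2 * (800 * d) <= T ^+ 2 * (T * e ^+ 2) ^+ 2.
  by rewrite ler_pM2l //; have := sqr_ge0 (T * e ^+ 2); lra.
lra.
Qed.

Lemma far_scaled_chi2_ge (T e d chi : R) : 0 < T -> e ^+ 2 <= 1 ->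
  4000 ^+ 2 * d <= (T * e ^+ 2) ^+ 2 -> 2 * e ^+ 2 < chi ->
  2 * 4000 ^+ 2 * d <= T ^+ 2 * chi.
Proof.
move=> T_gt0 e2_le1 size_sq_ge chi_gt.
have T2_gt0 : 0 < T ^+ 2 by rewrite exprn_gt0.
have : T ^+ 2 * (2 * e ^+ 2) <= T ^+ 2 * chi by rewrite ler_pM2l // ltW.
have : T ^+ 2 * (e ^+ 2 * e ^+ 2) <= T ^+ 2 * e ^+ 2.
  by rewrite ler_pM2l // ler_piMr ?sqr_ge0.
have sq_eq : (T * e ^+ 2) ^+ 2 = T ^+ 2 * (e ^+ 2 * e ^+ 2) by ring.
by rewrite sq_eq in size_sq_ge; lra.
Qed.

Lemma far_dev_bound (T d chi x : R) : 0 < T -> 0 <= d -> 0 < chi ->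
  2 * 4000 ^+ 2 * d <= T ^+ 2 * chi -> x ^+ 2 <= d * chi -> x <= T * chi / 4000.
Proof.
move=> T_gt0 d_ge0 chi_gt0 scaled_ge x_sq_le.
have M_ge0 : 0 <= T * chi / 4000 by rewrite divr_ge0 // mulr_ge0 ?ltW.
have dchi_le : d * chi <= (T * chi / 4000) ^+ 2.
  rewrite expr_div_n ler_pdivlMr ?exprn_gt0 //.
  have := ler_wpM2r (ltW chi_gt0) scaled_ge.
  have := mulr_ge0 d_ge0 (ltW chi_gt0).
  lra.
move: (T * chi / 4000) M_ge0 dchi_le => M M_ge0 dchi_le.
nra.
Qed.

Lemma far_error_small (T e d chi m : R) : 0 < T -> 0 <= d ->
  4000 <= T * e ^+ 2 -> 4000 ^+ 2 * d <= (T * e ^+ 2) ^+ 2 ->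
  2 * e ^+ 2 < chi -> 2 * 4000 ^+ 2 * d <= T ^+ 2 * chi ->
  m <= 2 * T ^+ 3 * chi * (1 + T * chi / 4000) +
       4 * T ^+ 2 * (2 * d * (1 + chi)) ->
  m / (T ^+ 2 * chi - T ^+ 2 * e ^+ 2) ^+ 2 <= 1 / 100.
Proof.
move=> T_gt0 d_ge0 size_ge size_sq_ge chi_gt scaled_ge m_le.
have chi_gt0 : 0 < chi by have := sqr_ge0 e; lra.
have T2_gt0 : 0 < T ^+ 2 by rewrite exprn_gt0.
have dchi_ge := ler_wpM2r (ltW chi_gt0) scaled_ge.
have dchi_ge0 := mulr_ge0 d_ge0 (ltW chi_gt0).
have gap_ge : T ^+ 2 * chi / 2 <= T ^+ 2 * chi - T ^+ 2 * e ^+ 2.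
  have : T ^+ 2 * (2 * e ^+ 2) <= T ^+ 2 * chi by rewrite ler_pM2l // ltW.
  lra.
have gap_sq_ge :
    (T ^+ 2 * chi / 2) ^+ 2 <= (T ^+ 2 * chi - T ^+ 2 * e ^+ 2) ^+ 2.
  have half_ge0 : 0 <= T ^+ 2 * chi / 2 by rewrite divr_ge0 // mulr_ge0 ?ltW.
  by rewrite ler_pXn2r ?nnegrE //; lra.
have Tchi_ge : 2 * (T * e ^+ 2) <= T * chi.
  have : T * (2 * e ^+ 2) <= T * chi by rewrite ler_pM2l // ltW.
  lra.
have z2_ge : 4 * 4000 ^+ 2 * d <= (T * chi) ^+ 2.
  have : (2 * (T * e ^+ 2)) ^+ 2 <= (T * chi) ^+ 2.
    by rewrite ler_pXn2r ?nnegrE //; lra.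
  lra.
have zz_ge : 8000 * (T * chi) <= (T * chi) ^+ 2.
  by rewrite [leRHS]expr2 ler_pM2r ?mulr_gt0 //; lra.
(* since T chi >= 8000 and T^2 chi >= 2 * 4000^2 d, the left side is below
   (3 / 4000 + 1 / 10^6) (T chi)^2 *)
have inner_le : 2 * (T * chi) + 2 * (T * chi) * (T * chi / 4000) +
    8 * d + 8 * (d * chi) <= (T * chi) ^+ 2 / 800 by lra.
have := ler_wpM2l (ltW T2_gt0) inner_le.
have := sqr_ge0 (T ^+ 2 * chi / 2).
rewrite ler_pdivrMr; first lra.
by apply: lt_le_trans gap_sq_ge; rewrite exprn_gt0 ?divr_gt0 ?mulr_gt0.
Qed.

Definition identity_test (d T : nat) (q : {ffun 'I_d -> R}) (tau : R)
    (s : samples d T) : R :=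
  if cross_stat q (test_weight q) s <= tau then 1 else 0.

Lemma identity_test_is_algorithm d T (q : {ffun 'I_d -> R}) tau :
  is_algorithm (@identity_test d T q tau).
Proof. by move=> s; rewrite /identity_test; case: ifP; rewrite ?lexx ?ler01. Qed.

Section IdentityTest.
Variables (d T : nat) (q : {ffun 'I_d -> R}) (p : 'I_T -> {ffun 'I_d -> R}).
Hypotheses (d_gt0 : (0 < d)%N) (T_gt0 : (0 < T)%N) (q_distr : is_distr q)
  (p_distr : forall t, is_distr (p t)).

Let p_ge0 t i : 0 <= p t i. Proof. by case: (p_distr t). Qed.
Let p_sum1 t : \sum_i p t i = 1. Proof. by case: (p_distr t). Qed.

Lemma mean_cross_stat_pavg :
  \sum_s sample_prob p s * cross_stat q (test_weight q) s =
  T%:R ^+ 2 * smoothed_chi2 q (pavg p).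
Proof.
rewrite mean_cross_stat // /smoothed_chi2 mulr_sumr.
by apply: eq_bigr => i _; rewrite drift_pavg //; ring.
Qed.

Lemma cross_stat_gap_le :
  \sum_s sample_prob p s * cross_stat q (test_weight q) s ^+ 2
    - (\sum_s sample_prob p s * cross_stat q (test_weight q) s) ^+ 2 <=
  2 * T%:R ^+ 3 * \sum_i test_weight q i ^+ 2 * (pavg p i - q i) ^+ 2 * pavg p i +
  4 * T%:R ^+ 2 * \sum_i (test_weight q i * pavg p i) ^+ 2.
Proof.
rewrite second_moment_cross_stat // mean_cross_stat //.
have mass_term : \sum_i test_weight q i ^+ 2 * drift p q i ^+ 2 * mass p i =
    T%:R ^+ 3 * \sum_i test_weight q i ^+ 2 * (pavg p i - q i) ^+ 2 * pavg p i.
  rewrite mulr_sumr; apply: eq_bigr => i _.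
  by rewrite mass_pavg // drift_pavg //; ring.
have mass_sq_term : \sum_i test_weight q i ^+ 2 * mass p i ^+ 2 =
    T%:R ^+ 2 * \sum_i (test_weight q i * pavg p i) ^+ 2.
  by rewrite mulr_sumr; apply: eq_bigr => i _; rewrite mass_pavg //; ring.
have := second_moment_gap_le p_ge0 p_sum1 (drift p q)
  (test_weight_ge0 d_gt0 q_distr).
by rewrite mass_term mass_sq_term !mulrA.
Qed.

Lemma identity_test_accepts (eps : R) : 0 < eps ->
  4000 ^+ 2 * d%:R <= (T%:R * eps ^+ 2) ^+ 2 -> pavg p = q ->
  99 / 100 <= accept_prob (identity_test q (T%:R ^+ 2 * eps ^+ 2)) p.
Proof.
move=> eps_gt0 size_sq_ge null.
have tau_gt0 : 0 < T%:R ^+ 2 * eps ^+ 2 by rewrite mulr_gt0 ?exprn_gt0 ?ltr0n.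
rewrite /accept_prob /identity_test.
apply: le_trans (accept_ge_second_moment (sample_prob_ge0 p_ge0)
  (sum_sample_prob p_sum1) _ tau_gt0).
apply: (null_error_small _ eps_gt0 size_sq_ge); first by rewrite ltr0n.
have chi0 : smoothed_chi2 q q = 0.
  by apply: big1 => i _; rewrite subrr [0 ^+ 2]expr2 mul0r mulr0.
have dev0 : \sum_i test_weight q i ^+ 2 * (q i - q i) ^+ 2 * q i = 0.
  by apply: big1 => i _; rewrite subrr [0 ^+ 2]expr2 mul0r mulr0 mul0r.
have := cross_stat_gap_le; rewrite mean_cross_stat_pavg null chi0 dev0.
have := ler_wpM2l (sqr_ge0 (T%:R : R)) (sum_weight_mass_sq_le d_gt0 q_distr q).
rewrite chi0; lra.
Qed.

Lemma identity_test_rejects (eps : R) : 0 < eps -> 4000 <= T%:R * eps ^+ 2 ->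
  4000 ^+ 2 * d%:R <= (T%:R * eps ^+ 2) ^+ 2 -> eps < dTV (pavg p) q ->
  accept_prob (identity_test q (T%:R ^+ 2 * eps ^+ 2)) p <= 1 / 100.
Proof.
move=> eps_gt0 size_ge size_sq_ge far.
have T_gt0' : 0 < T%:R :> R by rewrite ltr0n.
have dTV_le := dTV_le1 (pavg_distr T_gt0 p_distr) q_distr.
have e2_le1 : eps ^+ 2 <= 1.
  by apply: exprn_ile1; [exact: ltW | exact: ltW (lt_le_trans far dTV_le)].
have chi_gt := smoothed_chi2_gt d_gt0 q_distr eps_gt0 far.
set chi := smoothed_chi2 q (pavg p) in chi_gt *.
have chi_gt0 : 0 < chi by have := sqr_ge0 eps; lra.
have d_ge0 : 0 <= d%:R :> R by [].
have scaled_ge := far_scaled_chi2_ge T_gt0' e2_le1 size_sq_ge chi_gt.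
have dev_le i : test_weight q i * (pavg p i - q i) <= T%:R * chi / 4000.
  exact: far_dev_bound T_gt0' d_ge0 chi_gt0 scaled_ge (weight_dev_sq_le _ _ _ _).
have gap := cross_stat_gap_le; rewrite mean_cross_stat_pavg -/chi in gap.
have dev_sq_le := ler_wpM2l (exprn_ge0 3 (ltW T_gt0'))
  (sum_weight_sq_dev_mass_le d_gt0 q_distr dev_le).
have mass_sq_le := ler_wpM2l (exprn_ge0 2 (ltW T_gt0'))
  (sum_weight_mass_sq_le d_gt0 q_distr (pavg p)).
rewrite -/chi in dev_sq_le mass_sq_le.
rewrite /accept_prob /identity_test.
apply: le_trans (accept_le_variance (sample_prob_ge0 p_ge0)
  (sum_sample_prob p_sum1) _) _.
- rewrite mean_cross_stat_pavg -/chi ltr_pM2l ?exprn_gt0 //; lra.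
rewrite mean_cross_stat_pavg -/chi.
apply: far_error_small scaled_ge _ => //.
lra.
Qed.

End IdentityTest.

Theorem theorem2p1 :
  exists K : R, 0 < K /\
  forall (d : nat) (q : {ffun 'I_d -> R}) (eps : R) (T : nat),
    (1 <= d)%N -> is_distr q -> 0 < eps ->
    K * Num.sqrt (d%:R) / eps ^+ 2 <= T%:R ->
    exists A : samples d T -> R,
      is_algorithm A /\
      forall p : 'I_T -> {ffun 'I_d -> R},
        (forall t, is_distr (p t)) ->
        (pavg p = q -> 99 / 100 <= accept_prob A p) /\
        (eps < dTV (pavg p) q -> accept_prob A p <= 1 / 100).
Proof.
exists 4000; split=> // d q eps T d_gt0 q_distr eps_gt0 T_large.
have d_ge1 : 1 <= d%:R :> R by rewrite ler1n.
have [T_gt0 size_ge size_sq_ge] := sample_size_bounds d_ge1 eps_gt0 T_large.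
rewrite ltr0n in T_gt0.
exists (identity_test q (T%:R ^+ 2 * eps ^+ 2)).
split=> [|p p_distr]; first exact: identity_test_is_algorithm.
split; first exact: identity_test_accepts.
exact: identity_test_rejects.
Qed.
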